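(* Let $R$ be a finite commutative local ring with $\mathrm{char}(R)=2^n$ for some integer $n\geq 3$. The following are equivalent: (1) $\Gamma(R)$ has genus exactly $1$; (2) $\Gamma(R)$ is connected and $4$-regular; (3) $R\cong\mathbb{Z}_{2^n}$.
   Context: All rings are finite, commutative, with nonzero identity. The involutory Cayley graph $\Gamma(R)$ is the simple graph with vertex set $R$ in which distinct $x,y$ are adjacent iff $(x-y)^2=1$. Genus means the orientable genus of a graph. *)

From HB Require Import structures.
From mathcomp Require Import all_boot all_order all_algebra all_fingroup.
Set Implicit Arguments. Unset Strict Implicit. Unset Printing Implicit Defensive.
Import GRing.Theory.
Local Open Scope ring_scope.

Definition is_ideal (R : finComNzRingType) (I : {set R}) : Prop :=
  0 \in I /\ (forall x y, x \in I -> y \in I -> x + y \in I) /\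
  (forall r x, x \in I -> r * x \in I).

Definition is_maximal_ideal (R : finComNzRingType) (M : {set R}) : Prop :=
  is_ideal M /\ (1 \notin M) /\
  (forall J : {set R}, is_ideal J -> M \subset J -> J = M \/ 1 \in J).

Definition local_ring (R : finComNzRingType) : Prop :=
  exists M : {set R}, is_maximal_ideal M /\
    forall M' : {set R}, is_maximal_ideal M' -> M' = M.

Definition ring_char (R : finComNzRingType) (m : nat) : Prop :=
  (0 < m)%N /\ (m%:R : R) = 0 /\
  forall k : nat, (0 < k)%N -> (k < m)%N -> (k%:R : R) != 0.

Definition inv_cayley_adj (R : finComNzRingType) : rel R :=
  fun x y => (x != y) && ((x - y) ^+ 2 == 1).

Definition graph_connected (T : finType) (e : rel T) : Prop :=
  forall x y : T, connect e x y.

Definition graph_regular (T : finType) (e : rel T) (k : nat) : Prop :=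
  forall x : T, #|[set y | e x y]| = k.

Definition is_dart (T : finType) (e : rel T) (d : T * T) : bool := e d.1 d.2.

Definition darts (T : finType) (e : rel T) : {set T * T} := [set d | is_dart e d].

Definition rotation_system (T : finType) (e : rel T) (s : {perm (T * T)}) : Prop :=
  (forall d, ~~ is_dart e d -> s d = d) /\
  (forall d, is_dart e d -> (s d).1 = d.1) /\
  (forall d d', is_dart e d -> is_dart e d' -> d.1 = d'.1 -> fconnect s d d').

Definition face_perm (T : finType) (s : {perm (T * T)}) : T * T -> T * T :=
  fun d => s (d.2, d.1).

Definition isolated_vertices (T : finType) (e : rel T) : {set T} :=
  [set x | [forall y, ~~ e x y]].

(* Number of faces of the embedding given by s: face orbits of darts, plus one
   face for each isolated vertex. *)
Definition num_faces (T : finType) (e : rel T) (s : {perm (T * T)}) : nat :=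
  #|[set [set z | fconnect (face_perm s) d z] | d in darts e]|
  + #|isolated_vertices e|.

Definition num_components (T : finType) (e : rel T) : nat :=
  #|[set [set y | connect e x y] | x : T]|.

(* Genus of the embedding given by s is g where (Euler)
   V - E + F = 2c - 2g, i.e. 4g + 2V + 2F = 4c + 2E = 4c + #darts. *)
Definition embedding_genus (T : finType) (e : rel T) (s : {perm (T * T)}) (g : nat) : Prop :=
  (4 * g + 2 * #|T| + 2 * num_faces e s = 4 * num_components e + #|darts e|)%N.

(* The (orientable) genus of the graph: the minimum genus over all rotation
   systems (Heffter-Edmonds); for disconnected graphs this is the sum of the
   genera of the components. *)
Definition graph_genus (T : finType) (e : rel T) (g : nat) : Prop :=
  (exists s, rotation_system e s /\ embedding_genus e s g) /\
  (forall s, rotation_system e s ->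
     (4 * g + 2 * #|T| + 2 * num_faces e s <= 4 * num_components e + #|darts e|)%N).

(* Let h = 2^(n-1).  For n >= 3 the four elements 1, 1 + h, -1, -1 + h of R are
   distinct square roots of 1, so the involutory Cayley graph is at least 4-regular; it
   is also triangle-free, since u^2 = v^2 = (u + v)^2 = 1 would make 2uv = -1 a unit
   while 2 is nilpotent.  Hence every face of any embedding has length at least 4, and
   Euler's formula forces genus >= 1, with equality exactly when the graph is
   connected and 4-regular; the embedding rotating 1 -> 1 + h -> -1 -> -1 + h at every
   vertex then has all faces of length 4.  Finally, in a connected 4-regular graph the
   square roots of 1 are exactly these four integers, so every element of R is an
   integer and R = Z/2^n; conversely in Z/2^n these are the only square roots of 1. *)

From HB Require Import structures.
From mathcomp Require Import all_boot all_order all_algebra all_fingroup.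
From mathcomp Require Import zify ring.
Set Implicit Arguments. Unset Strict Implicit. Unset Printing Implicit Defensive.
Import GRing.Theory.

Lemma sqrt1_modn_pow2 n k : 0 < n -> k < 2 ^ n -> k ^ 2 = 1 %[mod 2 ^ n] ->
  k \in [:: 1; 2 ^ n.-1 + 1; 2 ^ n - 1; 2 ^ n.-1 - 1].
Proof.
case: n => // m _; rewrite expnS /=; set P := 2 ^ m => lt_k k2_eq1.
have P_gt0 : 0 < P by rewrite expn_gt0.
have odd_k : odd k.
  apply: contraT => even_k; move: (congr1 (modn^~ 2) k2_eq1).
  by rewrite !modn_dvdm ?dvdn_mulr // !modn2 oddX (negbTE even_k).
have {odd_k} [j def_k] : exists j, k = j.*2.+1.
  by exists k./2; rewrite -[LHS]odd_double_half odd_k.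
move/eqP: k2_eq1; rewrite eqn_mod_dvd; last by rewrite def_k; lia.
have -> : k ^ 2 - 1 = 2 * (j.*2 * j.+1) by rewrite def_k -!muln2; lia.
rewrite dvdn_pmul2l // => dvd_P.
suff [[r def_r] | [r def_r]] : (exists r, k - 1 = r * P) \/ (exists r, k + 1 = r * P).
- have : r < 2 by nia.
  by case: r def_r => [|[|]] //= def_r _; rewrite !inE; lia.
- have : r < 3 by nia.
  by case: r def_r => [|[|[|]]] //= def_r _; rewrite !inE; lia.
have coprime_P i : odd i -> coprime P i by move=> odd_i; rewrite coprimeXl // coprime2n.
case odd_j : (odd j).
- right; apply/dvdnP; have -> : k + 1 = 2 * j.+1 by lia.
  rewrite (_ : j.*2 * j.+1 = j * (2 * j.+1)) in dvd_P; last by lia.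
  by rewrite Gauss_dvdr ?coprime_P in dvd_P.
- left; apply/dvdnP; have -> : k - 1 = j.*2 by lia.
  by rewrite Gauss_dvdl // coprime_P //= odd_j in dvd_P.
Qed.

Lemma order_le_iter (T : finType) (f : T -> T) x k :
  iter k.+1 f x = x -> fingraph.order f x <= k.+1.
Proof.
move=> iter_x; rewrite -(size_traject f x k.+1); apply: order_le_cycle; last exact: mem_head.
rewrite trajectS /cycle /=.
have -> : rcons (traject f (f x) k) x = traject f (f x) k.+1 by rewrite trajectSr -iterSr iter_x.
exact: fpath_traject.
Qed.

Lemma face_perm_inj (T : finType) (s : {perm (T * T)}) : injective (face_perm s).
Proof. by move=> [a b] [c d] /perm_inj [-> ->]. Qed.

Section FaceOrbits.
Variables (T : finType) (e : rel T) (s : {perm (T * T)}).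
Hypotheses (sym_e : symmetric e) (rot_s : rotation_system e s).
Local Notation face := (face_perm s).

Lemma rotation_system_dart d : is_dart e d -> is_dart e (s d).
Proof.
move=> dart_d; apply: contraT => not_dart_sd.
have /perm_inj sd_d := rot_s.1 _ not_dart_sd.
by rewrite sd_d dart_d in not_dart_sd.
Qed.

Lemma face_perm_dart d : is_dart e d -> is_dart e (face d).
Proof. by case: d => u v dart_uv; apply: rotation_system_dart; rewrite /is_dart /= sym_e. Qed.

Lemma face_perm_fst d : is_dart e d -> (face d).1 = d.2.
Proof. by case: d => u v dart_uv; rewrite rot_s.2.1 // /is_dart /= sym_e. Qed.

Lemma fconnect_face_dart d z : is_dart e d -> fconnect face d z -> is_dart e z.
Proof.
move=> dart_d /iter_findex <-; elim: (findex _ _ _) => //= k IHk.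
exact: face_perm_dart.
Qed.

Definition face_orbits : {set {set T * T}} :=
  [set [set z | fconnect face d z] | d in darts e].

Lemma card_darts_face_orbits : #|darts e| = \sum_(A in face_orbits) #|A|.
Proof.
have -> : face_orbits = equivalence_partition (fconnect face) (darts e).
  apply: eq_in_imset => d; rewrite inE => dart_d; apply/setP => z; rewrite !inE.
  by case fc_dz: (fconnect face d z); rewrite ?andbF // (fconnect_face_dart dart_d fc_dz).
apply/card_partition/equivalence_partitionP => x y z _ _ _.
split=> [|fc_xy]; first exact: connect0.
by apply: same_connect => //; apply: fconnect_sym; apply: face_perm_inj.
Qed.

Lemma card_face_orbit A : A \in face_orbits ->
  exists2 d, is_dart e d & #|A| = fingraph.order face d.
Proof. by case/imsetP => d; rewrite inE => dart_d ->; exists d; rewrite // cardsE. Qed.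

Lemma leq_card_face_orbits k :
  (forall d, is_dart e d -> k <= fingraph.order face d) -> k * #|face_orbits| <= #|darts e|.
Proof.
move=> ge_k; rewrite card_darts_face_orbits mulnC -sum_nat_const.
by apply: leq_sum => A /card_face_orbit [d /ge_k le_k ->].
Qed.

Lemma card_darts_face_orbits_const k :
  (forall d, is_dart e d -> fingraph.order face d = k) -> #|darts e| = k * #|face_orbits|.
Proof.
move=> eq_k; rewrite card_darts_face_orbits mulnC -sum_nat_const.
by apply: eq_bigr => A /card_face_orbit [d /eq_k <-].
Qed.

Lemma face_order_ge4 :
  irreflexive e -> (forall u v w, e u v -> e v w -> e w u -> False) ->
  (forall u v, e u v -> exists2 w, e u w & w != v) ->
  forall d, is_dart e d -> 4 <= fingraph.order face d.
Proof.
move=> irr_e no_triangle nbr2 d dart_d.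
have dart_fd := face_perm_dart dart_d; have dart_ffd := face_perm_dart dart_fd.
have := iter_order (@face_perm_inj T s) d.
case: (fingraph.order face d) (fingraph.order_gt0 face d) => [|[|[|[|k]]]] //= _ cycle_d.
- by move: (dart_d); rewrite /is_dart -(face_perm_fst dart_d) cycle_d irr_e.
- have face_d_vu : face d = (d.2, d.1).
    by rewrite [face d]surjective_pairing face_perm_fst // -(face_perm_fst dart_fd) cycle_d.
  have e_vu : e d.2 d.1 by rewrite sym_e.
  have [w e_vw ne_wu] := nbr2 _ _ e_vu.
  have /iter_findex := rot_s.2.2 (d.2, d.1) (d.2, w) e_vu e_vw erefl.
  by rewrite iter_fix // => -[eq_wu]; rewrite eq_wu eqxx in ne_wu.
- case: (no_triangle d.1 d.2 (face d).2) => //.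
  + by move: (dart_fd); rewrite /is_dart face_perm_fst.
  + move: (dart_ffd); rewrite /is_dart -(face_perm_fst dart_ffd) cycle_d.
    by rewrite (face_perm_fst dart_fd).
Qed.

End FaceOrbits.

Lemma num_facesE (T : finType) (e : rel T) (s : {perm (T * T)}) :
  (forall x, exists y, e x y) -> num_faces e s = #|face_orbits e s|.
Proof.
move=> no_isolated; rewrite /num_faces -[RHS]addn0; congr addn.
apply/eqP; rewrite cards_eq0; apply/eqP/setP => x; rewrite !inE.
by have [y e_xy] := no_isolated x; apply/forallP => /(_ y); rewrite e_xy.
Qed.

Lemma num_components_gt0 (T : finType) (e : rel T) (x0 : T) : 0 < num_components e.
Proof. by rewrite card_gt0; apply/set0Pn; exists [set y | connect e x0 y]; apply: imset_f. Qed.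

Lemma num_components1P (T : finType) (e : rel T) (x0 : T) :
  num_components e = 1 <-> graph_connected e.
Proof.
split=> [one_comp x y | conn_e].
  have comp_x z : [set y | connect e z y] \in [set [set y | connect e x y] | x : T].
    exact: imset_f.
  have /setP/(_ y) := card_le1_eqP (eq_leq one_comp) _ _ (comp_x x) (comp_x y).
  by rewrite !inE connect0.
apply/eqP/cards1P; exists [set: T]; apply/setP => A; rewrite !inE.
apply/imsetP/eqP => [[x _ ->]|->]; last exists x0 => //.
all: by apply/setP => z; rewrite !inE conn_e.
Qed.

Local Open Scope ring_scope.

Section RingChar.
Variables (R : finComNzRingType) (c : nat).
Hypothesis charR : ring_char R c.

Lemma natr_modn_char k : k%:R = (k %% c)%:R :> R.
Proof. by rewrite {1}(divn_eq k c) natrD natrM charR.2.1 mulr0 add0r. Qed.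

Lemma natr_eq_char k j : (k%:R == j%:R :> R) = (k == j %[mod c])%N.
Proof.
have [c_gt0 [_ charR_min]] := charR.
rewrite [k%:R]natr_modn_char [j%:R]natr_modn_char.
move: (ltn_pmod k c_gt0) (ltn_pmod j c_gt0); move: (k %% c)%N (j %% c)%N => a b.
wlog le_ba : a b / (b <= a)%N.
  move=> IH lt_a lt_b; case: (leqP b a) => [le_ba | /ltnW le_ab]; first exact: IH.
  by rewrite eq_sym [RHS]eq_sym; apply: IH.
move=> lt_a _; apply/eqP/eqP => [eq_ab | -> //]; apply/eqP; rewrite eqn_leq le_ba andbT.
rewrite leqNgt; apply/negP => lt_ba.
have : (a - b)%:R != 0 :> R.
  by apply: charR_min; [rewrite subn_gt0 | exact: leq_ltn_trans (leq_subr b a) lt_a].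
by rewrite natrB 1?ltnW // eq_ab subrr eqxx.
Qed.

Lemma natr_eq0_char k : (k%:R == 0 :> R) = (c %| k)%N.
Proof. by rewrite -[0]/(0%:R) natr_eq_char mod0n. Qed.

End RingChar.

Lemma ring_char_Zp p : (1 < p)%N -> ring_char 'Z_p p.
Proof.
move=> p_gt1; split; [exact: ltnW | split; first exact: pchar_Zp].
move=> k k_gt0 lt_kp; apply/eqP => /(congr1 val).
by rewrite /= val_Zp_nat // modn_small //; lia.
Qed.

Section InvolutoryCayleyGraph.
Variable R : finComNzRingType.
Local Notation adj := (@inv_cayley_adj R).

Definition sqrt1 : {set R} := [set u | u ^+ 2 == 1].

Lemma inv_cayley_adjE x y : adj x y = (x - y \in sqrt1).
Proof.
rewrite /inv_cayley_adj inE; case: eqVneq => [->|] //=.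
by rewrite subrr expr0n eq_sym oner_eq0.
Qed.

Lemma inv_cayley_adj_sym : symmetric adj.
Proof. by move=> x y; rewrite !inv_cayley_adjE !inE -opprB sqrrN. Qed.

Lemma inv_cayley_adj_irr : irreflexive adj.
Proof. by move=> x; rewrite /inv_cayley_adj eqxx. Qed.

Lemma inv_cayley_dartE d : is_dart adj d = (d.2 - d.1 \in sqrt1).
Proof. by rewrite /is_dart inv_cayley_adj_sym inv_cayley_adjE. Qed.

Lemma inv_cayley_adj_addr1 x : adj x (x + 1).
Proof. by rewrite inv_cayley_adjE inE opprD addNKr sqrrN expr1n. Qed.

Lemma card_inv_cayley_nbr x : #|[set y | adj x y]| = #|sqrt1|.
Proof.
have -> : [set y | adj x y] = (fun y => x - y) @^-1: sqrt1.
  by apply/setP => y; rewrite !inE inv_cayley_adjE inE.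
by apply: card_preimset => y z /addrI /oppr_inj.
Qed.

Lemma graph_regular_inv_cayley k : graph_regular adj k <-> #|sqrt1| = k.
Proof. by split=> [/(_ 0)|sqrt1_k x]; rewrite card_inv_cayley_nbr. Qed.

(* [#|(R : finType)|] matches the [#|T|] of [embedding_genus] syntactically, as [lia] needs. *)
Lemma card_inv_cayley_darts : #|darts adj| = (#|(R : finType)| * #|sqrt1|)%N.
Proof.
have -> : darts adj = (fun d => (d.1, d.2 - d.1)) @^-1: setX [set: R] sqrt1.
  by apply/setP => d; rewrite !inE inv_cayley_dartE inE.
by rewrite card_preimset ?cardsX ?cardsT // => -[x y] [x' y'] /= [<-] /addIr ->.
Qed.

Lemma inv_cayley_adj_other_nbr : (2 : R) != 0 -> forall u v, exists2 w, adj u w & w != v.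
Proof.
move=> two_neq0 u v; have [->|] := eqVneq v (u + 1); last first.
  by exists (u + 1); rewrite 1?eq_sym ?inv_cayley_adj_addr1.
exists (u - 1); first by rewrite inv_cayley_adj_sym -{2}[u](subrK 1) inv_cayley_adj_addr1.
apply: contra two_neq0 => /eqP eq_u.
have -> : 2 = (u + 1) - (u - 1) :> R by ring.
by rewrite eq_u subrr.
Qed.

Lemma inv_cayley_triangle_free n : (2 ^ n)%:R = 0 :> R ->
  forall u v w, adj u v -> adj v w -> adj w u -> False.
Proof.
move=> char2n u v w; rewrite !inv_cayley_adjE !inE => /eqP uv2 /eqP vw2.
have -> : w - u = - ((u - v) + (v - w)) by ring.
rewrite sqrrN sqrrD uv2 vw2 -subr_eq0 => /eqP unit_eq.
(* [2 (u - v) (v - w) = -1] is a unit, whereas [2] is nilpotent. *)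
have two_unit : (u - v) * (v - w) *+ 2 = -1 by rewrite -[LHS]subr0 -unit_eq; ring.
have := congr1 (fun x => x ^+ n) two_unit.
by rewrite -mulr_natr exprMn -natrX char2n mulr0 => /esym/eqP; rewrite signr_eq0.
Qed.

Lemma inv_cayley_connect_nat k : connect adj 0 k%:R.
Proof.
elim: k => [|k IHk]; first exact: connect0.
by apply: connect_trans IHk (connect1 _); rewrite -natr1 inv_cayley_adj_addr1.
Qed.

End InvolutoryCayleyGraph.

Section TranslationRotation.
Variables (R : finComNzRingType) (rho : R -> R).
Hypothesis rho_inj : injective rho.

Definition trans_rot_fun (d : R * R) : R * R := (d.1, d.1 + rho (d.2 - d.1)).

Lemma trans_rot_fun_inj : injective trans_rot_fun.
Proof. by move=> [x y] [x' y'] [/= <-] /addrI /rho_inj /addIr ->. Qed.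

Definition trans_rot : {perm (R * R)} := perm trans_rot_fun_inj.

Lemma trans_rotE x t : trans_rot (x, x + t) = (x, x + rho t).
Proof. by rewrite permE /trans_rot_fun /= [x + t]addrC addrK. Qed.

Lemma face_perm_trans_rotE x t :
  face_perm trans_rot (x, x + t) = (x + t, x + t + rho (- t)).
Proof. by rewrite /face_perm /= -{2}[x](addrK t) trans_rotE. Qed.

Lemma iter_trans_rot k x t : iter k trans_rot (x, x + t) = (x, x + iter k rho t).
Proof. by elim: k => //= k ->; rewrite trans_rotE. Qed.

Lemma rotation_system_trans_rot :
  (forall t, t \notin sqrt1 R -> rho t = t) -> {in sqrt1 R &, forall t t', fconnect rho t t'} ->
  rotation_system (@inv_cayley_adj R) trans_rot.
Proof.
move=> rho_id rho_trans; split; [|split] => [[x y]|d _|[x y] [x' y']].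
- by rewrite inv_cayley_dartE permE /trans_rot_fun /= => /rho_id ->; rewrite subrKC.
- by rewrite permE.
rewrite !inv_cayley_dartE /= => sqrt1_t sqrt1_t' eq_x; rewrite -eq_x in sqrt1_t' *.
have /iter_findex iter_t := rho_trans _ _ sqrt1_t sqrt1_t'.
have := fconnect_iter trans_rot (findex rho (y - x) (y' - x)) (x, x + (y - x)).
by rewrite iter_trans_rot iter_t !subrKC.
Qed.

End TranslationRotation.

Section CharPow2.
Variables (R : finComNzRingType) (n : nat).
Hypotheses (n_ge3 : (3 <= n)%N) (charR : ring_char R (2 ^ n)).
Local Notation adj := (@inv_cayley_adj R).

Let expn_pred : (2 ^ n = 2 * 2 ^ n.-1)%N.
Proof. by rewrite -expnS prednK //; lia. Qed.

Let expn_pred_ge4 : (4 <= 2 ^ n.-1)%N.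
Proof. by change (2 ^ 2 <= 2 ^ n.-1)%N; rewrite leq_exp2l //; lia. Qed.

Definition half_char : R := (2 ^ n.-1)%:R.
Local Notation h := half_char.

Lemma half_char_double : h + h = 0.
Proof. by apply/eqP; rewrite -natrD addnn -mul2n -expn_pred (natr_eq0_char charR) dvdnn. Qed.

Lemma half_char_sqr : h * h = 0.
Proof.
by apply/eqP; rewrite -natrM -expnD (natr_eq0_char charR) dvdn_exp2l //; lia.
Qed.

Lemma oppr_half_char : - h = h.
Proof. by apply/esym/eqP; rewrite -addr_eq0 half_char_double. Qed.

Definition sqrt1_cycle : seq R := [:: 1; 1 + h; -1; -1 + h].

Lemma sqrt1_cycle_natE :
  sqrt1_cycle = [seq k%:R | k <- [:: 1; 2 ^ n.-1 + 1; 2 ^ n - 1; 2 ^ n.-1 - 1]%N].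
Proof.
by rewrite /sqrt1_cycle /= natrD !natrB ?expn_gt0 // charR.2.1 sub0r (addrC 1) (addrC (-1)).
Qed.

Lemma uniq_sqrt1_cycle : uniq sqrt1_cycle.
Proof.
rewrite sqrt1_cycle_natE map_inj_in_uniq; first by rewrite /= !inE; lia.
move=> a b a_in b_in /eqP; rewrite (natr_eq_char charR) !modn_small => [/eqP //||];
  by rewrite !inE in a_in b_in; lia.
Qed.

Lemma sqrt1_cycle_sub : {subset sqrt1_cycle <= sqrt1 R}.
Proof.
have sqr_addh u : (u + h) ^+ 2 = u ^+ 2 + u * (h + h) + h * h by ring.
move=> u; rewrite !inE => /or4P[] /eqP ->;
  by rewrite ?sqr_addh ?half_char_double ?half_char_sqr ?mulr0 ?addr0 ?sqrrN expr1n.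
Qed.

Lemma card_sqrt1_ge4 : (4 <= #|sqrt1 R|)%N.
Proof.
rewrite -[4%N]/(size sqrt1_cycle) -(card_uniqP uniq_sqrt1_cycle).
exact/subset_leq_card/subsetP/sqrt1_cycle_sub.
Qed.

Lemma sqrt1_cycleP : #|sqrt1 R| = 4%N -> sqrt1 R =i sqrt1_cycle.
Proof.
move=> card_sqrt1 u; apply/esym; move: u; apply/subset_cardP; last exact/subsetP/sqrt1_cycle_sub.
by rewrite card_sqrt1 (card_uniqP uniq_sqrt1_cycle).
Qed.

Definition sqrt1_rot : R -> R := next sqrt1_cycle.

Lemma sqrt1_rotE : [/\ sqrt1_rot 1 = 1 + h, sqrt1_rot (1 + h) = -1,
  sqrt1_rot (-1) = -1 + h & sqrt1_rot (-1 + h) = 1].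
Proof.
rewrite /sqrt1_rot /=.
by have /= /and5P[/eqP-> /eqP-> /eqP-> /eqP->] := cycle_next uniq_sqrt1_cycle.
Qed.

Lemma sqrt1_rot_inj : injective sqrt1_rot.
Proof. exact: can_inj (prev_next uniq_sqrt1_cycle). Qed.

Definition sqrt1_rotation : {perm (R * R)} := trans_rot sqrt1_rot_inj.

Lemma rotation_system_sqrt1_rotation :
  #|sqrt1 R| = 4%N -> rotation_system adj sqrt1_rotation.
Proof.
move=> /sqrt1_cycleP sqrt1E; apply: rotation_system_trans_rot => [t | t t'].
  by rewrite sqrt1E /sqrt1_rot next_nth => /negbTE ->.
rewrite !sqrt1E => t_in t'_in.
by rewrite (fconnect_cycle (cycle_next uniq_sqrt1_cycle) t_in).
Qed.

Lemma iter4_face_sqrt1_rotation x t : t \in sqrt1_cycle ->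
  iter 4 (face_perm sqrt1_rotation) (x, x + t) = (x, x + t).
Proof.
have [rho1 rho1h rhom1 rhom1h] := sqrt1_rotE.
have opp1h : - (1 + h) = -1 + h by rewrite opprD oppr_half_char.
have oppm1h : - (-1 + h) = 1 + h by rewrite opprD opprK oppr_half_char.
(* The four steps along a face run through all of [sqrt1_cycle], whose sum is [h + h = 0]. *)
rewrite !inE => /or4P[] /eqP -> /=;
  rewrite !(face_perm_trans_rotE, opprK, opp1h, oppm1h, rho1, rho1h, rhom1, rhom1h);
  by congr pair; rewrite -[x in RHS]addr0 -half_char_double; ring.
Qed.

Lemma face_order_inv_cayley_ge4 s : rotation_system adj s ->
  forall d, is_dart adj d -> (4 <= fingraph.order (face_perm s) d)%N.
Proof.
move=> rot_s; apply: face_order_ge4 => //.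
- exact: inv_cayley_adj_sym.
- exact: inv_cayley_adj_irr.
- exact: inv_cayley_triangle_free charR.2.1.
move=> u v _; apply: inv_cayley_adj_other_nbr.
by rewrite (natr_eq0_char charR) gtnNdvd //; lia.
Qed.

Lemma face_order_sqrt1_rotation : #|sqrt1 R| = 4%N ->
  forall d, is_dart adj d -> fingraph.order (face_perm sqrt1_rotation) d = 4%N.
Proof.
move=> card_sqrt1 [x y] dart_xy; apply/eqP; rewrite eqn_leq.
rewrite (face_order_inv_cayley_ge4 (rotation_system_sqrt1_rotation card_sqrt1)) // andbT.
apply: order_le_iter; rewrite -[y](subrKC x) iter4_face_sqrt1_rotation //.
by move: dart_xy; rewrite inv_cayley_dartE sqrt1_cycleP.
Qed.

Lemma four_num_faces_le s : rotation_system adj s ->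
  (4 * num_faces adj s <= #|(R : finType)| * #|sqrt1 R|)%N.
Proof.
move=> rot_s; rewrite num_facesE => [|x]; last by exists (x + 1); apply: inv_cayley_adj_addr1.
rewrite -card_inv_cayley_darts; apply: leq_card_face_orbits => //.
  exact: inv_cayley_adj_sym.
exact: face_order_inv_cayley_ge4.
Qed.

Lemma inv_cayley_genus1_regular :
  graph_genus adj 1 -> graph_connected adj /\ graph_regular adj 4.
Proof.
case=> -[s [rot_s]]; rewrite /embedding_genus card_inv_cayley_darts => euler _.
have := four_num_faces_le rot_s; have := num_components_gt0 adj 0.
have := card_sqrt1_ge4; have : (0 < #|(R : finType)|)%N by apply/card_gt0P; exists 0.
(* Euler's relation and [4 F <= 2 E] give [8 (c - 1) + #|R| (#|sqrt1 R| - 4) <= 0]. *)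
move=> R_gt0 sqrt1_ge4 comp_gt0 faces_le.
have one_comp : num_components adj = 1%N by nia.
have sqrt1_4 : #|sqrt1 R| = 4%N by nia.
by split; [exact: (num_components1P adj 0).1 | exact/graph_regular_inv_cayley].
Qed.

Lemma inv_cayley_regular_genus1 :
  graph_connected adj -> graph_regular adj 4 -> graph_genus adj 1.
Proof.
move=> /(num_components1P adj 0) one_comp /graph_regular_inv_cayley sqrt1_4.
rewrite /graph_genus /embedding_genus card_inv_cayley_darts sqrt1_4 one_comp; split.
  exists sqrt1_rotation; split; first exact: rotation_system_sqrt1_rotation.
  have := card_darts_face_orbits_const (@inv_cayley_adj_sym R)
    (rotation_system_sqrt1_rotation sqrt1_4) (face_order_sqrt1_rotation sqrt1_4).
  rewrite num_facesE => [|x]; last by exists (x + 1); apply: inv_cayley_adj_addr1.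
  by rewrite card_inv_cayley_darts sqrt1_4; lia.
by move=> s /four_num_faces_le; rewrite sqrt1_4; lia.
Qed.

Lemma inv_cayley_regular_natr :
  graph_connected adj -> graph_regular adj 4 -> forall x : R, exists k, x = k%:R.
Proof.
move=> conn_adj /graph_regular_inv_cayley /sqrt1_cycleP sqrt1E x.
have adj_natr y z : adj y z -> (exists k, y = k%:R) -> exists k, z = k%:R.
  rewrite inv_cayley_adj_sym inv_cayley_adjE sqrt1E sqrt1_cycle_natE.
  by case/mapP => j _ zy_j [k y_k]; exists (k + j)%N; rewrite natrD -y_k -zy_j subrKC.
have [p path_p ->] := connectP (conn_adj 0 x).
have : exists k, (0 : R) = k%:R by exists 0%N.
elim: p 0 path_p => [|z p IHp] y //= /andP[adj_yz path_p] /(adj_natr _ _ adj_yz).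
exact: IHp.
Qed.

Lemma inv_cayley_natr_regular :
  (forall x : R, exists k, x = k%:R) -> graph_connected adj /\ graph_regular adj 4.
Proof.
move=> natR; split=> [x y | ].
  have [k ->] := natR x; have [j ->] := natR y.
  apply: connect_trans (inv_cayley_connect_nat _ j).
  by rewrite (sym_connect_sym (@inv_cayley_adj_sym R)) inv_cayley_connect_nat.
apply/graph_regular_inv_cayley/eqP; rewrite eqn_leq card_sqrt1_ge4 andbT.
rewrite -[4%N]/(size sqrt1_cycle) -(card_uniqP uniq_sqrt1_cycle).
apply/subset_leq_card/subsetP => u; rewrite inE; have [k ->] := natR u.
rewrite (natr_modn_char charR) -natrX (natr_eq_char charR _ 1).
have n_gt0 : (0 < n)%N by lia.
move=> /eqP /(sqrt1_modn_pow2 n_gt0); rewrite ltn_pmod ?expn_gt0 // => /(_ isT) k_in.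
by rewrite sqrt1_cycle_natE map_f.
Qed.

End CharPow2.

Lemma natr_ring_iso_Zp (R : finComNzRingType) p : (1 < p)%N -> ring_char R p ->
  (forall x : R, exists k, x = k%:R) -> exists f : {rmorphism R -> 'Z_p}, bijective f.
Proof.
move=> p_gt1 charR natR.
have natR_eq (x : R) : exists k, x == k%:R by have [k ->] := natR x; exists k.
pose f x : 'Z_p := (xchoose (natR_eq x))%:R.
have f_natr k : f k%:R = k%:R.
  apply/eqP; rewrite (natr_eq_char (ring_char_Zp p_gt1)) -(natr_eq_char charR) eq_sym.
  exact: xchooseP (natR_eq k%:R).
have f_add : GRing.nmod_morphism f.
  split=> [|x y]; first exact: (f_natr 0).
  by have [[a ->] [b ->]] := (natR x, natR y); rewrite -natrD !f_natr natrD.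
have f_mul : GRing.monoid_morphism f.
  split=> [|x y]; first exact: (f_natr 1).
  by have [[a ->] [b ->]] := (natR x, natR y); rewrite -natrM !f_natr natrM.
pose fR : {rmorphism R -> 'Z_p} := HB.pack f
  (GRing.isNmodMorphism.Build _ _ f f_add) (GRing.isMonoidMorphism.Build _ _ f f_mul).
exists fR, (fun i : 'Z_p => (i : nat)%:R) => [x | i] /=; last by rewrite f_natr natr_Zp.
by have [k ->] := natR x; rewrite f_natr val_Zp_nat // -natr_modn_char.
Qed.

Lemma natr_of_iso_Zp (R : finComNzRingType) p :
  (exists f : {rmorphism R -> 'Z_p}, bijective f) -> forall x : R, exists k, x = k%:R.
Proof.
case=> f [g fK _] x; exists (f x : nat).
by apply: (can_inj fK); rewrite rmorph_nat natr_Zp.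
Qed.

Theorem mainTheorem6 (R : finComNzRingType) (n : nat) :
  (3 <= n)%N -> local_ring R -> ring_char R (2 ^ n) ->
  (graph_genus (@inv_cayley_adj R) 1 <->
     (graph_connected (@inv_cayley_adj R) /\ graph_regular (@inv_cayley_adj R) 4)) /\
  ((graph_connected (@inv_cayley_adj R) /\ graph_regular (@inv_cayley_adj R) 4) <->
     exists f : {rmorphism R -> 'Z_(2 ^ n)}, bijective f).
Proof.
move=> n_ge3 _ charR; split; split.
- exact: inv_cayley_genus1_regular n_ge3 charR.
- by case; apply: inv_cayley_regular_genus1 n_ge3 charR.
- case=> conn_R reg_R; apply: (natr_ring_iso_Zp _ charR).
    by rewrite -(expn0 2) ltn_exp2l //; lia.
  exact: inv_cayley_regular_natr n_ge3 charR conn_R reg_R.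
- by move/natr_of_iso_Zp; apply: inv_cayley_natr_regular n_ge3 charR.
Qed.
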